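(* Let $n$ be a positive integer and $w_1\le\dots\le w_m$ a feasible partition of $n$ with partial sums $R_i=w_1+\dots+w_i$, $R_0=0$. Then for every $1\le i\le m$, $w_i \le \frac{2R_i+1}{3}$.
   Context: A weighing partition of a positive integer $n$ is a multiset of positive integers summing to $n$ such that every integer $\ell$ with $1\le\ell\le n$ is a sum $\sum_j u_jw_j$ with $u_j\in\{-1,0,1\}$. A feasible partition of $n$ is a weighing partition of $n$ whose number of parts $m$ is minimal among all weighing partitions of $n$, written $w_1\le\dots\le w_m$. *)

From mathcomp Require Import all_boot all_order all_algebra.
Set Implicit Arguments. Unset Strict Implicit. Unset Printing Implicit Defensive.
Import Order.TTheory GRing.Theory Num.Theory.

(* A multiset of positive integers is represented by a list [w] (order irrelevant
   for the definitions below; feasible partitions are additionally sorted). *)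

Definition signed_rep (w : seq nat) (l : int) : Prop :=
  exists u : seq int,
    size u = size w /\
    all (fun c : int => (c == 0) || (c == 1) || (c == (-1)%R)) u /\
    (\sum_(j < size w) (nth 0 u j) * (nth 0%N w j)%:Z = l)%R.

Definition weighing_partition (n : nat) (w : seq nat) : Prop :=
  all (fun x => 0 < x)%N w /\ sumn w = n /\
  forall l : nat, (1 <= l <= n)%N -> signed_rep w l%:Z.

Definition feasible_partition (n : nat) (w : seq nat) : Prop :=
  weighing_partition n w /\
  forall w' : seq nat, weighing_partition n w' -> (size w <= size w')%N.

From mathcomp Require Import all_boot all_order all_algebra.
From mathcomp Require Import zify ring.
Import Order.TTheory GRing.Theory Num.Theory.

(* Already for a sorted weighing partition, w_(k+1) <= 2 R_k + 1, which is the
   claim after adding 2 w_(k+1) to both sides. If instead w_(k+1) >= 2 R_k + 2,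
   consider l = B - R_k - 1, where B = n - R_k is the total weight of the parts
   w_(k+1) <= ... <= w_m. In a signed representation of l the first k parts
   contribute at most R_k in absolute value, and the remaining parts contribute
   either exactly B or at most B - w_(k+1), since lowering any coefficient of a
   part w_j >= w_(k+1) costs at least w_(k+1). Both cases miss l. *)

Definition signed_coef (c : int) : bool := (c == 0) || (c == 1) || (c == -1)%R.

Lemma signed_coefP (c : int) : signed_coef c -> [\/ c = 0, c = 1 | c = -1]%R.
Proof. by case/orP => [/orP[]|] /eqP ->; [constructor 1 | constructor 2 | constructor 3]. Qed.

Section SignedSums.

Variables (I : finType) (P : pred I) (u : I -> int) (a : I -> nat).
Hypothesis u_signed : forall j, P j -> signed_coef (u j).

Lemma signed_sum_bounds :
  (- (\sum_(j | P j) a j)%:Z <= \sum_(j | P j) u j * (a j)%:Z <= (\sum_(j | P j) a j)%:Z)%R.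
Proof.
rewrite (big_morph Posz PoszD (erefl _)) -sumrN.
by apply/andP; split; apply: ler_sum => j /u_signed/signed_coefP[] ->; lia.
Qed.

Lemma signed_sum_gap (x : nat) : (forall j, P j -> x <= a j)%N ->
  (\sum_(j | P j) u j * (a j)%:Z = (\sum_(j | P j) a j)%:Z \/
   \sum_(j | P j) u j * (a j)%:Z + x%:Z <= (\sum_(j | P j) a j)%:Z)%R.
Proof.
move=> a_ge_x.
have -> : ((\sum_(j | P j) a j)%:Z =
    \sum_(j | P j) u j * (a j)%:Z + \sum_(j | P j) (1 - u j) * (a j)%:Z)%R.
  by rewrite (big_morph Posz PoszD (erefl _)) -big_split; apply: eq_bigr => j _ /=; ring.
case: (boolP [exists j, P j && (u j != 1)%R]) => [/existsP[j /andP[Pj uj_ne1]] | ].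
  right; rewrite lerD2l (bigD1 j) //=.
  have rest_ge0 : (0 <= \sum_(i | P i && (i != j)) (1 - u i) * (a i)%:Z)%R.
    by apply: sumr_ge0 => i /andP[/u_signed/signed_coefP[] -> _]; lia.
  move: rest_ge0 (a_ge_x j Pj); set rest := (\sum_(i | _) _)%R.
  by move: uj_ne1; case/signed_coefP: (u_signed j Pj) => -> // _; lia.
rewrite negb_exists => /forallP all_one; left.
rewrite [X in (_ + X)%R]big1 ?addr0 // => j Pj.
by move: (all_one j); rewrite Pj negbK => /eqP ->; rewrite subrr mul0r.
Qed.

End SignedSums.

Lemma sumn_take_ord (w : seq nat) (k : nat) :
  sumn (take k w) = \sum_(j < size w | (j < k)%N) nth 0%N w j.
Proof.
elim: w k => [|a w IH] [|k] /=; rewrite ?big_ord0 // big_mkcond big_ord_recl /=.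
  by rewrite big1.
by rewrite IH big_mkcond.
Qed.

Lemma weighing_part_le_double_prefix (n : nat) (w : seq nat) (k : nat) :
  sorted leq w -> weighing_partition n w -> (k < size w)%N ->
  (nth 0%N w k <= 2 * sumn (take k w) + 1)%N.
Proof.
move=> w_sorted [_ [w_sum w_repr]] k_lt.
set A := sumn (take k w); set x := nth 0%N w k.
rewrite leqNgt; apply/negP => x_big.
pose head := fun j : 'I_(size w) => (j < k)%N.
set B := \sum_(j < size w | ~~ head j) nth 0%N w j.
have n_eq : n = A + B.
  by rewrite -w_sum -(take_size w) sumn_take_ord /A sumn_take_ord (bigID head);
     congr (_ + _); apply: eq_bigl => j; rewrite ltn_ord.
have x_le_B : (x <= B)%N.
  by rewrite /B (bigD1 (Ordinal k_lt)) /head /= ?ltnn // leq_addr.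
have tail_ge_x : forall j : 'I_(size w), ~~ head j -> (x <= nth 0%N w j)%N.
  move=> j; rewrite /head -leqNgt => kj.
  by apply: (sorted_leq_nth leq_trans leqnn) => //; rewrite inE.
have [u [u_size [u_coefs u_sum]]] := w_repr (B - A - 1)%N ltac:(lia).
have u_signed (j : 'I_(size w)) : signed_coef u`_j.
  by apply: (all_nthP 0%R u_coefs); rewrite u_size.
rewrite (bigID head) /= in u_sum.
pose a := fun j : 'I_(size w) => nth 0%N w j.
have A_sum : \sum_(j | head j) a j = A by rewrite /A sumn_take_ord.
have := @signed_sum_bounds _ head _ a (fun j _ => u_signed j).
have := @signed_sum_gap _ (predC head) _ a (fun j _ => u_signed j) x tail_ge_x.
rewrite A_sum -/B; move: u_sum.
set Lo := (\sum_(j | head j) _)%R; set Hi := (\sum_(j | ~~ head j) _)%R; lia.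
Qed.

(* [nth 0 w i.-1] is w_i and [sumn (take i w)] is R_i. *)
Theorem mainTheorem5 (n : nat) (w : seq nat) :
  (0 < n)%N ->
  sorted leq w ->
  feasible_partition n w ->
  forall i : nat, (1 <= i <= size w)%N ->
    ((nth 0%N w i.-1)%:R <= (2 * (sumn (take i w))%:R + 1) / 3 :> rat)%R.
Proof.
move=> _ w_sorted [w_weighing _] [//|k] /= k_lt.
have := @weighing_part_le_double_prefix n w k w_sorted w_weighing k_lt.
rewrite (take_nth 0%N k_lt) sumn_rcons.
set A := sumn _; set x := nth _ _ _ => x_le.
have : (x * 3 <= 2 * (A + x) + 1)%N by lia.
by rewrite ler_pdivlMr // -(ler_nat rat) natrM natrD natrM natrD.
Qed.
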